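(* Let $E$ be a countable directed graph satisfying the standing assumptions (1)–(4) of the context, let $S=V_{x_E}$, let $\mathcal S$ be the set of sources of $E_S$, and let $\beta<0$. Then the orbit $[x_E]$ is $\beta$-summable if and only if $$\lim_{n\to\infty}\sum_{\mu\in\mathcal SE^*v_n}e^{\beta(n-|\mu|)}<\infty,$$ where $\mathcal SE^*v_n=\{\mu\in E^*:s(\mu)\in\mathcal S,\ r(\mu)=v_n\}$ (the sequence is eventually nondecreasing, so the limit exists in $[0,\infty]$).
   Context: Directed graph conventions: paths $\mu=\mu_0\cdots\mu_{n-1}$ with $r(\mu_i)=s(\mu_{i+1})$, $|\mu|$ the length, vertices as paths of length $0$, $vE^*w$ paths from $v$ to $w$, $E^\infty$ infinite paths, $vE^1$ edges with source $v$. A source is a vertex receiving no edges. For $S\subseteq E^0$, $E_S$ has vertex set $S$ and edges with source and range in $S$. For $x=x_0x_1\cdots\in E^\infty$: $V_x=\{v\in E^0: vE^*s(x_n)\neq\emptyset\text{ for some }n\}$, $W_x=\{s(x_j):j\ge0\}$. Standing assumptions: (1) there is a fixed $x_E=x_0x_1\cdots\in E^\infty$ with $v_0:=s(x_0)$ a source; write $v_i=s(x_i)$; (2) with $S=V_{x_E}$, $|vE_S^1|<\infty$ for all $v\in S$; (3) $E_S$ has no nontrivial cycles; (4) $V_{x_E}\setminus W_{x_E}$ is finite. The orbit of $x\in E^\infty$ is $[x]=\{y\in E^\infty:\exists n,m\ge0,\ y_{i+m}=x_{i+n}\ \forall i\}$. If $x$ is not eventually periodic, for $y\in[x]$ written $y=\mu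 z$, $x=\nu z$ ($\mu,\nu$ finite, $z\in E^\infty$) set $l_x(y)=e^{-(|\mu|-|\nu|)}$; $[x]$ is $\beta$-summable if $x$ is not eventually periodic and $\sum_{y\in[x]}l_x(y)^\beta<\infty$. *)

From mathcomp Require Import all_boot all_order all_algebra.
From mathcomp Require Import all_classical all_reals all_analysis.
Set Implicit Arguments. Unset Strict Implicit. Unset Printing Implicit Defensive.
Import Order.TTheory GRing.Theory Num.Theory.
Local Open Scope classical_set_scope.
Local Open Scope ring_scope.

(* A countable directed graph E = (E^0, E^1, s, r): vertices V, edges E,
   source map s and range map r (an edge e goes from s e to r e). *)

(* Finite paths: a start vertex together with a list of edges
   mu_0 ... mu_{n-1} with r(mu_i) = s(mu_{i+1}); a vertex is a path of
   length 0 (empty edge list). *)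
Definition fpath (V E : countType) := (V * seq E)%type.

Definition fp_valid (V E : countType) (s r : E -> V) (p : fpath V E) : bool :=
  if p.2 is e :: es then (s e == p.1) && path (fun a b => r a == s b) e es
  else true.

Definition fp_len (V E : countType) (p : fpath V E) : nat := size p.2.
Definition fp_src (V E : countType) (p : fpath V E) : V := p.1.
Definition fp_rng (V E : countType) (r : E -> V) (p : fpath V E) : V :=
  last p.1 (map r p.2).

Definition paths_from_to (V E : countType) (s r : E -> V) (v w : V)
  : set (fpath V E) :=
  [set p | fp_valid s r p /\ fp_src p = v /\ fp_rng r p = w].

Definition inf_path (V E : countType) (s r : E -> V) (x : nat -> E) : Prop :=
  forall i, r (x i) = s (x i.+1).

Definition Vx (V E : countType) (s r : E -> V) (x : nat -> E) : set V :=
  [set v | exists n, paths_from_to s r v (s (x n)) !=set0].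
Definition Wx (V E : countType) (s : E -> V) (x : nat -> E) : set V :=
  [set v | exists j, v = s (x j)].

Definition is_source (V E : countType) (r : E -> V) (v : V) : Prop :=
  forall e : E, r e <> v.

Definition edges_in (V E : countType) (s r : E -> V) (S : set V) : set E :=
  [set e | S (s e) /\ S (r e)].

Definition sources_of_sub (V E : countType) (s r : E -> V) (S : set V) : set V :=
  [set v | S v /\ forall e, edges_in s r S e -> r e <> v].

Definition no_nontrivial_cycles (V E : countType) (s r : E -> V) (S : set V)
  : Prop :=
  forall p : fpath V E, fp_valid s r p -> (0 < fp_len p)%N ->
    (forall e, e \in p.2 -> edges_in s r S e) -> fp_rng r p <> fp_src p.

Definition eventually_periodic (E : Type) (x : nat -> E) : Prop :=
  exists n p, (0 < p)%N /\ forall i, (n <= i)%N -> x (i + p)%N = x i.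

Definition orbit (V E : countType) (s r : E -> V) (x : nat -> E)
  : set (nat -> E) :=
  [set y | inf_path s r y /\ exists n m, forall i, y (i + m)%N = x (i + n)%N].

(* l_x(y) = e^{-(|mu| - |nu|)} where y = mu z, x = nu z (|mu| = m, |nu| = n);
   the pair (n, m) is chosen (well defined when x is not eventually periodic) *)
Definition lag_pair (E : countType) (x y : nat -> E) : nat * nat :=
  xget (0, 0)%N [set nm | forall i, y (i + nm.2)%N = x (i + nm.1)%N].

Definition lx (R : realType) (E : countType) (x y : nat -> E) : R :=
  expR (- ((lag_pair x y).2%:R - (lag_pair x y).1%:R)).

Definition beta_summable (R : realType) (V E : countType) (s r : E -> V)
  (x : nat -> E) (beta : R) : Prop :=
  ~ eventually_periodic x /\
  (\esum_(y in orbit s r x) ((lx R x y) `^ beta)%:E < +oo)%E.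

Definition source_sum (R : realType) (V E : countType) (s r : E -> V)
  (x : nat -> E) (beta : R) (n : nat) : \bar R :=
  \esum_(mu in [set mu : fpath V E | fp_valid s r mu /\
                    sources_of_sub s r (Vx s r x) (fp_src mu) /\
                    fp_rng r mu = s (x n)])
     (expR (beta * (n%:R - (fp_len mu)%:R)))%:E.

From Pilot Require Import Defs.
From mathcomp Require Import all_boot all_order all_algebra.
From mathcomp Require Import all_classical all_reals all_analysis.
From mathcomp Require Import zify ring lra.
Import Order.TTheory GRing.Theory Num.Theory.
Local Open Scope classical_set_scope.
Local Open Scope ring_scope.
Set Implicit Arguments. Unset Strict Implicit. Unset Printing Implicit Defensive.

(* Since E_S has no cycles, a path of E_S visits no vertex twice
   and cannot reach v_j after v_N with j > N; as V_x \ W_x is finite, paths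
   ending at v_N have length at most K + N, so every such path extends
   backwards to one starting at a source of E_S. Also x_E is not eventually
   periodic, so l_x(y)^beta = e^{beta (n - m)} whenever y = mu z, x = nu z,
   |mu| = m, |nu| = n.

   Summation part. mu |-> mu x_n maps S E^* v_n into S E^* v_{n+1}, so f is
   nondecreasing and lim f = sup f; mu |-> mu x_n x_{n+1} ... embeds
   S E^* v_n into the orbit preserving weights, so f(n) <= sum over [x_E].
   Conversely, finitely many orbit points y = mu_y x_N x_{N+1} ... (common N)
   are coded injectively by pairs (source path nu_y extending mu_y, |mu_y|),
   and summing a geometric series over |mu_y| <= |nu_y| bounds their total
   weight by (1 - e^beta)^{-1} f(N). *)

Section FinitePaths.
Variables (V E : countType) (s r : E -> V).

(* Validity and range of the finite path with start vertex [u] and edges [es];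
   working with the two components separately makes concatenation easy. *)
Definition valid_from (u : V) (es : seq E) : bool := fp_valid s r (u, es).
Definition range_from (u : V) (es : seq E) : V := fp_rng r (u, es).

Lemma valid_cons u e es :
  valid_from u (e :: es) = (s e == u) && valid_from (r e) es.
Proof.
rewrite /valid_from /fp_valid /=; case: es => [|f es] /=; first by rewrite andbT.
by rewrite (eq_sym (s f)).
Qed.

Lemma range_cons u e es : range_from u (e :: es) = range_from (r e) es.
Proof. by []. Qed.

Lemma valid_cat u a b :
  valid_from u (a ++ b) = valid_from u a && valid_from (range_from u a) b.
Proof. by elim: a u => [|e a IH] u //=; rewrite !valid_cons IH andbA. Qed.

Lemma range_cat u a b : range_from u (a ++ b) = range_from (range_from u a) b.
Proof. by rewrite /range_from /fp_rng /= map_cat last_cat. Qed.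

Lemma valid_rcons u a e :
  valid_from u (rcons a e) = valid_from u a && (s e == range_from u a).
Proof. by rewrite -cats1 valid_cat valid_cons andbT. Qed.

Lemma range_rcons u a e : range_from u (rcons a e) = r e.
Proof. by rewrite /range_from /fp_rng /= map_rcons last_rcons. Qed.

Lemma visited_vertex_split u es z : z \in u :: map r es ->
  exists a b, es = a ++ b /\ z = range_from u a.
Proof.
rewrite inE => /orP[/eqP->|]; first by exists [::], es.
case/mapP => f fin ->; case/splitPr: fin => a b.
by exists (rcons a f), b; rewrite cat_rcons range_rcons.
Qed.

Lemma segment_valid (y : nat -> E) (hy : inf_path s r y) n k :
  valid_from (s (y n)) (map y (iota n k)) /\
  range_from (s (y n)) (map y (iota n k)) = s (y (n + k)%N).
Proof.
elim: k n => [|k IH] n; first by rewrite addn0.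
rewrite /= valid_cons range_cons eqxx /= hy; have [h1 h2] := IH n.+1.
by rewrite h1 h2 addSnnS.
Qed.

End FinitePaths.

Section AcyclicGraph.
Variables (V E : countType) (s r : E -> V) (x : nat -> E).
Hypothesis x_path : inf_path s r x.
Hypothesis acyclic : no_nontrivial_cycles s r (Vx s r x).
Local Notation S := (Vx s r x).
Local Notation valid := (valid_from s r).
Local Notation range := (range_from r).

Lemma x_vertex_in_S i : S (s (x i)).
Proof. by exists i, (s (x i), [::]). Qed.

Lemma x_edge_in_S i : edges_in s r S (x i).
Proof. by split; [apply: x_vertex_in_S | rewrite x_path; apply: x_vertex_in_S]. Qed.

Lemma S_backward u es : valid u es -> S (range u es) -> S u.
Proof.
move=> hv [n [[w fs] [hv' [/= hw hrng]]]].
exists n, (u, es ++ fs); split; last split => //.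
  by change (valid u (es ++ fs)); rewrite valid_cat hv -hw; exact: hv'.
by change (range u (es ++ fs) = s (x n)); rewrite range_cat -hw; exact: hrng.
Qed.

Lemma path_edges_in_S u es : valid u es -> S (range u es) ->
  forall e, e \in es -> edges_in s r S e.
Proof.
move=> hv hS e ein; move: hv hS; case/splitPr: ein => a b hv hS.
move: hv; rewrite valid_cat valid_cons => /and3P[_ _ hb].
rewrite range_cat range_cons in hS.
split; last exact: S_backward hb hS.
by apply: (@S_backward (s e) [:: e & b]); rewrite ?valid_cons ?eqxx.
Qed.

Lemma visited_uniq u es : valid u es ->
  (forall e, e \in es -> edges_in s r S e) -> uniq (u :: map r es).
Proof.
elim: es u => [|e es IH] u // hv hE.
change (uniq (u :: r e :: map r es)); rewrite cons_uniq.
have hv0 := hv; move: hv; rewrite valid_cons => /andP[_ hv].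
rewrite IH ?andbT //; last by move=> f fin; apply: hE; rewrite inE fin orbT.
apply/negP => hu.
have : u \in map r (e :: es) by [].
case/mapP => f fin hf; move: hv0 hE; case/splitPr: fin => a b hv0 hE.
apply: (acyclic (p := (u, rcons a f))) => //.
- rewrite -[fp_valid _ _ _]/(valid u (rcons a f)) valid_rcons.
  by move: hv0; rewrite valid_cat valid_cons => /and3P[-> -> _].
- by rewrite /fp_len size_rcons.
- move=> g /=; rewrite mem_rcons => gin; apply: hE.
  by rewrite mem_cat; move: gin; rewrite inE => /orP[/eqP->|->]; rewrite ?inE ?eqxx ?orbT.
- by rewrite -[fp_rng _ _]/(range u (rcons a f)) range_rcons.
Qed.

(* A path ending at v_N = s(x_N) can only visit v_j for j <= N: otherwise
   following x from v_N back to v_j would close a cycle in E_S. *)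
Lemma visited_x_index_le u es N j : valid u es -> range u es = s (x N) ->
  s (x j) \in u :: map r es -> (j <= N)%N.
Proof.
move=> hv hr /visited_vertex_split [a [b [hes hz]]].
rewrite leqNgt; apply/negP => hNj.
have hvb : valid (range u a) b by move: hv; rewrite hes valid_cat => /andP[].
have hrb : range (range u a) b = s (x N) by rewrite -range_cat -hes.
have [hsv hsr] := segment_valid x_path N (j - N).
have hES : forall e, e \in es -> edges_in s r S e.
  by apply: (path_edges_in_S hv); rewrite hr; apply: x_vertex_in_S.
apply: (acyclic (p := (s (x j), b ++ map x (iota N (j - N))))).
- rewrite -[fp_valid _ _ _]/(valid (s (x j)) _) valid_cat hz hvb /= hrb hsv //.
- by rewrite /fp_len size_cat size_map size_iota addn_gt0 subn_gt0 hNj orbT.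
- move=> e /=; rewrite mem_cat => /orP[eb|].
    by apply: hES; rewrite hes mem_cat eb orbT.
  by case/mapP => i _ ->; apply: x_edge_in_S.
- rewrite -[fp_rng _ _]/(range (s (x j)) _) range_cat hz hrb hsr /=.
  by rewrite subnKC // ltnW.
Qed.

(* A period of x would give a cycle in E_S. *)
Lemma x_not_eventually_periodic : ~ eventually_periodic x.
Proof.
case=> n [p [hp hper]].
have [hsv hsr] := segment_valid x_path n p.
apply: (acyclic (p := (s (x n), map x (iota n p)))) => //.
- by rewrite /fp_len /= size_map size_iota.
- by move=> e /= /mapP [i _ ->]; apply: x_edge_in_S.
- by rewrite -[fp_rng _ _]/(range (s (x n)) _) hsr hper.
Qed.

Hypothesis finite_off_x : finite_set (S `\` Wx s x).

(* Paths ending at v_N have length at most K + N for a fixed K: their vertices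
   are distinct and lie in the finite set (S \ W_x) or among v_0, ..., v_N. *)
Lemma path_length_bound : exists K, forall u es N,
  valid u es -> range u es = s (x N) -> (size es <= K + N)%N.
Proof.
have [sF hsF] := (finite_seqP _).1 finite_off_x.
exists (size sF) => u es N hv hr.
have hES : forall e, e \in es -> edges_in s r S e.
  by apply: (path_edges_in_S hv); rewrite hr; apply: x_vertex_in_S.
suff hsub : {subset u :: map r es <= sF ++ map (fun j => s (x j)) (iota 0 N.+1)}.
  have := uniq_leq_size (visited_uniq hv hES) hsub.
  by rewrite size_cat size_map size_iota /= size_map addnS ltnS.
move=> z hz; have [a [b [hes hza]]] := visited_vertex_split hz.
have hSz : S z.
  apply: (@S_backward z b); first by move: hv; rewrite hes valid_cat hza => /andP[].
  by rewrite hza -range_cat -hes hr; apply: x_vertex_in_S.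
rewrite mem_cat; apply/orP; have [[j hj]|hW] := pselect (Wx s x z).
  right; apply/mapP; exists j => //.
  by rewrite mem_iota /= ltnS (visited_x_index_le hv hr) // -hj.
by left; have : (S `\` Wx s x) z by []; rewrite hsF.
Qed.

Definition source_paths N : set (Defs.fpath V E) :=
  [set mu | fp_valid s r mu /\ sources_of_sub s r S (fp_src mu) /\
            fp_rng r mu = s (x N)].

(* Every path ending at v_N extends backwards to a path starting at a source
   of E_S: keep prepending edges of E_S; by [path_length_bound] this stops. *)
Lemma extend_to_source u es N : valid u es -> range u es = s (x N) ->
  exists2 nu, source_paths N nu & exists pre, nu.2 = pre ++ es.
Proof.
move=> hv hr; have [K hK] := path_length_bound.
suff ext d u' es' : valid u' es' -> range u' es' = s (x N) ->
    (exists pre, es' = pre ++ es) -> (K + N < size es' + d)%N ->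
  exists2 nu, source_paths N nu & exists pre, nu.2 = pre ++ es.
  apply: (ext (K + N).+1 u es hv hr); first by exists [::].
  by rewrite addnS ltnS leq_addl.
elim: d u' es' => [|d IH] u' es' hv' hr' hpre hlt.
  by move: hlt; rewrite addn0 ltnNge (hK _ _ _ hv' hr').
have [hsrc|hns] := pselect (sources_of_sub s r S u'); first by exists (u', es').
have hSu : S u' by apply: (S_backward hv'); rewrite hr'; apply: x_vertex_in_S.
have : ~ forall e, edges_in s r S e -> r e <> u' by move=> h; apply: hns.
case/existsNP => e /not_implyP [he /contrapT hre].
apply: (IH (s e) (e :: es')).
- by rewrite valid_cons eqxx hre.
- by rewrite range_cons hre.
- by case: hpre => pre ->; exists (e :: pre).
- by rewrite /= addSnnS.
Qed.

End AcyclicGraph.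

Lemma lag_pairP (E : countType) (x y : nat -> E) n m :
  (forall i, y (i + m)%N = x (i + n)%N) ->
  forall i, y (i + (lag_pair x y).2)%N = x (i + (lag_pair x y).1)%N.
Proof.
by move=> h; apply: (xgetPex (0, 0)%N (ex_intro
  (fun nm : nat * nat => forall i, y (i + nm.2)%N = x (i + nm.1)%N) (n, m) h)).
Qed.

Lemma shift_difference_unique (E : Type) (x y : nat -> E) n m n' m' :
  ~ eventually_periodic x ->
  (forall i, y (i + m)%N = x (i + n)%N) ->
  (forall i, y (i + m')%N = x (i + n')%N) -> (m + n' = m' + n)%N.
Proof.
move=> np h h'.
have key i : x (i + (m' + n))%N = x (i + (m + n'))%N.
  by rewrite addnA -h -addnA (addnC m' m) addnA h' -addnA.
wlog lt_shift : n m n' m' h h' key / (m' + n < m + n')%N.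
  move=> hw; case: (ltngtP (m' + n) (m + n')) => // hlt; first exact: hw.
  by apply/esym/(hw n' m' n m) => // i; rewrite key.
exfalso; apply: np; exists (m' + n)%N, (m + n' - (m' + n))%N.
split; first by rewrite subn_gt0.
move=> i hi; have := key (i - (m' + n))%N.
have -> : (i - (m' + n) + (m' + n) = i)%N by lia.
by have -> : (i - (m' + n) + (m + n') = i + (m + n' - (m' + n)))%N by lia.
Qed.

Lemma lx_powE (R : realType) (E : countType) (x y : nat -> E) n m (beta : R) :
  ~ eventually_periodic x -> (forall i, y (i + m)%N = x (i + n)%N) ->
  lx R x y `^ beta = expR (beta * (n%:R - m%:R)).
Proof.
move=> np h; rewrite /lx -expRM.
have e := shift_difference_unique np h (lag_pairP h).
have e' : (m + (lag_pair x y).1)%:R = ((lag_pair x y).2 + n)%:R :> R by rewrite e.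
rewrite !natrD in e'; rewrite mulrC; congr (expR (beta * _)); lra.
Qed.

Lemma sum_le_uniq_subseq (R : numDomainType) (T : eqType) (s t : seq T)
    (F : T -> R) :
  uniq s -> uniq t -> {subset s <= t} -> (forall i, 0 <= F i) ->
  \sum_(i <- s) F i <= \sum_(i <- t) F i.
Proof.
move=> us ut sst F0.
have restrict : \sum_(i <- t | i \in s) F i = \sum_(i <- s) F i.
  rewrite -big_filter; apply: perm_big; apply: uniq_perm => //.
    exact: filter_uniq.
  by move=> i; rewrite mem_filter; case: (boolP (i \in s)) => // /sst ->.
rewrite [X in _ <= X](bigID (fun i => i \in s)) /= restrict.
by rewrite -[X in X <= _]addr0 lerD2l sumr_ge0.
Qed.

Lemma geometric_tail_bound (R : realType) (beta : R) (N K : nat) : beta < 0 ->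
  \sum_(k <- iota 0 K.+1) expR (beta * (N%:R - k%:R)) <=
  (1 - expR beta)^-1 * expR (beta * (N%:R - K%:R)).
Proof.
move=> hb; set q := expR beta; set a := expR (beta * (N%:R - K%:R)).
have -> : \sum_(k <- iota 0 K.+1) expR (beta * (N%:R - k%:R)) =
          series (geometric a q) K.+1.
  have -> : series (geometric a q) K.+1 = \sum_(i < K.+1) a * q ^+ i.
    by rewrite /series /geometric /= big_mkord.
  rewrite -[iota 0 K.+1]/(index_iota 0 K.+1) big_mkord (reindex_inj rev_ord_inj).
  apply: eq_bigr => i _; rewrite /a /q /= subSS.
  by rewrite -expRM_natl -expRD natrB -1?ltnS //; congr expR; ring.
rewrite mulrC; apply: geometric_le_lim; rewrite ?expR_ge0 ?expR_gt0 //.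
by rewrite gtr0_norm ?expR_gt0 // expR_lt1.
Qed.

Lemma pair_sum_bound (R : realType) (T : eqType) (len : T -> nat) (beta : R)
    (N : nat) (nus : seq T) (qs : seq (T * nat)) :
  beta < 0 -> uniq nus -> uniq qs ->
  {subset qs <= [seq (a, k) | a <- nus, k <- iota 0 (len a).+1]} ->
  \sum_(q <- qs) expR (beta * (N%:R - q.2%:R)) <=
  (1 - expR beta)^-1 * \sum_(a <- nus) expR (beta * (N%:R - (len a)%:R)).
Proof.
move=> hb unus uqs sub.
have uQ : uniq [seq (a, k) | a <- nus, k <- iota 0 (len a).+1].
  apply: allpairs_uniq_dep => // [a _|]; first exact: iota_uniq.
  by move=> [a k] [a' k'] _ _ [-> ->].
apply: (le_trans (sum_le_uniq_subseq uqs uQ sub (fun q => expR_ge0 _))).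
rewrite big_allpairs_dep /= mulr_sumr; apply: ler_sum => a _.
exact: geometric_tail_bound.
Qed.

Lemma esum_subset (R : realType) (T : choiceType) (A B : set T)
    (a : T -> \bar R) :
  A `<=` B -> (\esum_(i in A) a i <= \esum_(i in B) a i)%E.
Proof.
move=> AB; apply: ge_ereal_sup => _ [X [finX XA] <-]; apply: esum_ge.
by exists X => //; split => //; exact: subset_trans XA AB.
Qed.

Lemma prefix_tail_inj (E : eqType) (y y' z : nat -> E) (m : nat)
    (pre pre' : seq E) :
  (forall i, y (i + m)%N = z i) -> (forall i, y' (i + m)%N = z i) ->
  pre ++ map y (iota 0 m) = pre' ++ map y' (iota 0 m) -> y = y'.
Proof.
move=> hy hy' hcat; apply: funext => i.
case: (ltnP i m) => hi; last by rewrite -(subnK hi) hy hy'.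
have hsize : size pre = size pre'.
  by move/(congr1 size): hcat; rewrite !size_cat !size_map => /addIn.
move/eqP: hcat; rewrite eqseq_cat // => /andP[_ /eqP hm].
have := congr1 (fun l => nth (z 0%N) l i) hm.
by rewrite !(nth_map 0%N) ?size_iota // nth_iota.
Qed.

Section SummabilityCriterion.
Variables (R : realType) (V E : countType) (s r : E -> V) (x : nat -> E).
Hypothesis x_path : inf_path s r x.
Hypothesis acyclic : no_nontrivial_cycles s r (Vx s r x).
Hypothesis finite_off_x : finite_set (Vx s r x `\` Wx s x).
Variable beta : R.
Local Notation f := (source_sum s r x beta).
Local Notation paths := (source_paths s r x).

Let x_aperiodic := x_not_eventually_periodic x_path acyclic.

Definition source_weight N (mu : Defs.fpath V E) : R :=
  expR (beta * (N%:R - (fp_len mu)%:R)).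

Lemma source_sumE N : f N = \esum_(mu in paths N) (source_weight N mu)%:E.
Proof. by []. Qed.

Definition orbit_sum : \bar R := \esum_(y in Defs.orbit s r x) (lx R x y `^ beta)%:E.

(* f is nondecreasing: mu |-> mu x_N maps SE^*v_N injectively into
   SE^*v_{N+1} and preserves N - |mu|. *)
Lemma source_sum_nondecreasing : nondecreasing_seq f.
Proof.
apply/nondecreasing_seqP => n; rewrite !source_sumE.
pose g (mu : Defs.fpath V E) := (mu.1, rcons mu.2 (x n)).
rewrite (eq_esum (b := fun mu => (source_weight n.+1 (g mu))%:E)); last first.
  move=> [u es] _; rewrite /source_weight /g /fp_len /= size_rcons.
  congr (expR _)%:E.
  by rewrite -[n.+1]addn1 -[(size es).+1]addn1 !natrD; ring.
rewrite -(esum_image _ g (fun mu => (source_weight n.+1 mu)%:E)); last by move=> [u es] [u' es'] _ _ /= [-> /rcons_inj [->]].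
apply: esum_subset => _ [[u es] [hv [hsrc hr]] <-]; split; last split => //.
  rewrite -[fp_valid _ _ _]/(valid_from s r u (rcons es (x n))) valid_rcons.
  by apply/andP; split => //; apply/eqP; rewrite -hr.
by rewrite -[fp_rng _ _]/(range_from r u (rcons es (x n))) range_rcons x_path.
Qed.

(* The infinite path mu x_N x_{N+1} ... obtained by following mu and then x. *)
Definition attach_tail N (mu : Defs.fpath V E) : nat -> E :=
  fun i => nth (x (i - size mu.2 + N)%N) mu.2 i.

Lemma attach_tail_shift N mu i :
  attach_tail N mu (i + size mu.2)%N = x (i + N)%N.
Proof. by rewrite /attach_tail nth_default ?leq_addl // addnK. Qed.

Lemma attach_tail_inf_path N mu : paths N mu -> inf_path s r (attach_tail N mu).
Proof.
case: mu => u es [hv [_ hr]] i; rewrite /attach_tail /=.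
case: (ltngtP i.+1 (size es)) => hi.
- rewrite (set_nth_default (x 0%N)) ?(ltnW hi) // (set_nth_default (x 0%N) _ hi).
  case: es hv hi {hr} => [|e es] // hv hi.
  move: hv; rewrite /fp_valid /= => /andP[_ /(pathP (x 0%N))].
  by move=> /(_ i hi) /eqP.
- rewrite !nth_default ?(ltnW hi) //.
  have hi' : (size es <= i)%N := hi.
  by rewrite (subSn hi') addSn x_path.
- case/lastP: es hv hr hi => [|a e] // hv hr.
  rewrite size_rcons => -[->].
  rewrite nth_rcons ltnn eqxx nth_default ?size_rcons // subnn add0n.
  by rewrite -[fp_rng _ _]/(range_from r u (rcons a e)) range_rcons in hr.
Qed.

Lemma attach_tail_inj N : set_inj (paths N) (attach_tail N).
Proof.
move=> [u es] [u' es'] /set_mem [hv [_ hr]] /set_mem [hv' [_ hr']] he.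
have hsz : size es = size es'.
  have shift' i : attach_tail N (u, es) (i + size es')%N = x (i + N)%N.
    by rewrite he attach_tail_shift.
  apply/eqP; rewrite -(eqn_add2r N).
  by rewrite (shift_difference_unique x_aperiodic (attach_tail_shift N _) shift').
have hes : es = es'.
  apply: (@eq_from_nth _ (x 0%N) es es' hsz) => i hi.
  have := congr1 (fun f => f i) he; rewrite /attach_tail /=.
  have hi' : (i < size es')%N by rewrite -hsz.
  by rewrite (set_nth_default (x 0%N)) // (set_nth_default (x 0%N) _ hi').
subst es'; congr pair; case: es hv hv' hr hr' {he hsz} => [|e es] hv hv' hr hr'.
  by move: hr hr'; rewrite /fp_rng /= => -> ->.
by move: hv hv'; rewrite -!/(valid_from s r _ _) !valid_cons => /andP[/eqP <- _] /andP[/eqP <- _].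
Qed.

(* f(N) <= sum over the orbit, via the weight-preserving injection
   [attach_tail N]; this gives the direction "summable => bounded". *)
Lemma source_sum_le_orbit_sum N : (f N <= orbit_sum)%E.
Proof.
rewrite source_sumE (eq_esum (b := fun mu =>
  (lx R x (attach_tail N mu) `^ beta)%:E)); last first.
  by move=> mu _; rewrite (lx_powE _ x_aperiodic (attach_tail_shift N mu)).
rewrite -(esum_image _ _ (fun y => (lx R x y `^ beta)%:E)); last exact: attach_tail_inj.
apply: esum_subset => _ [mu hmu <-]; split; first exact: attach_tail_inf_path.
by exists N, (size mu.2) => i; rewrite attach_tail_shift.
Qed.

Lemma orbit_common_shift (ys : seq (nat -> E)) :
  (forall y, y \in ys -> Defs.orbit s r x y) ->
  exists N (m : (nat -> E) -> nat),
    forall y, y \in ys -> forall i, y (i + m y)%N = x (i + N)%N.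
Proof.
move=> hys; set M := (\max_(y <- ys) (lag_pair x y).1)%N.
exists M, (fun y => ((lag_pair x y).2 + (M - (lag_pair x y).1))%N) => y yin i.
have hM : ((lag_pair x y).1 <= M)%N.
  exact: (@leq_bigmax_seq _ _ xpredT (fun y => (lag_pair x y).1)).
have [_ [n [m h]]] := hys y yin.
by rewrite (addnC (lag_pair x y).2) addnA (lag_pairP h) -addnA subnK.
Qed.

Lemma source_extension y N m : inf_path s r y ->
  (forall i, y (i + m)%N = x (i + N)%N) ->
  exists2 nu, paths N nu & exists pre, nu.2 = pre ++ map y (iota 0 m).
Proof.
move=> hy hyx; have [hv hr] := segment_valid hy 0 m.
apply: (extend_to_source x_path acyclic finite_off_x hv).
by rewrite hr -(add0n m) hyx.
Qed.

Lemma finite_source_sum_le N (nus : seq (Defs.fpath V E)) :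
  uniq nus -> (forall nu, nu \in nus -> paths N nu) ->
  ((\sum_(nu <- nus) source_weight N nu)%:E <= f N)%E.
Proof.
move=> unus hnus; rewrite source_sumE -sumEFin; apply: esum_ge.
exists [set` nus]; first by split; [exact: finite_seq | move=> nu /hnus].
by rewrite -fsbig_seq.
Qed.

Hypothesis beta_neg : beta < 0.

(* Any finite partial sum over the orbit is at most (1 - e^beta)^{-1} L when
   L bounds f: with a common N, write y = mu_y x_N ... and extend mu_y to a
   source path nu_y; then y |-> (nu_y, |mu_y|) is injective and
   |mu_y| <= |nu_y|, so [pair_sum_bound] applies. *)
Lemma orbit_partial_sum_le (L : R) (ys : seq (nat -> E)) :
  (forall N, (f N <= L%:E)%E) -> uniq ys ->
  (forall y, y \in ys -> Defs.orbit s r x y) ->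
  \sum_(y <- ys) lx R x y `^ beta <= (1 - expR beta)^-1 * L.
Proof.
move=> hL uys hys; have [N [m hm]] := orbit_common_shift hys.
pose code y (nu : Defs.fpath V E) :=
  paths N nu /\ exists pre, nu.2 = pre ++ map y (iota 0 (m y)).
pose nu y := xget (s (x N), [::]) (code y).
have hnu y : y \in ys -> code y (nu y).
  move=> yin; apply: xgetPex; have [hy _] := hys y yin.
  by have [nu' ? ?] := source_extension hy (hm y yin); exists nu'.
pose coding y := (nu y, m y).
have coding_inj : {in ys &, injective coding}.
  move=> y y' yin y'in [e1 e2].
  have [_ [pre hpre]] := hnu y yin; have [_ [pre' hpre']] := hnu y' y'in.
  apply: (prefix_tail_inj (hm y yin) (pre := pre) (pre' := pre')).
    by rewrite e2; exact: hm.
  by rewrite -hpre e1 hpre' e2.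
have -> : \sum_(y <- ys) lx R x y `^ beta =
          \sum_(q <- map coding ys) expR (beta * (N%:R - q.2%:R)).
  rewrite big_map; apply: eq_big_seq => y yin.
  exact: lx_powE x_aperiodic (hm y yin).
apply: (le_trans (pair_sum_bound (len := fun a => size a.2) N beta_neg
  (undup_uniq (map nu ys)) _ _)).
- by rewrite map_inj_in_uniq.
- move=> _ /mapP [y yin ->]; apply/allpairsPdep; exists (nu y), (m y).
  split => //; first by rewrite mem_undup map_f.
  have [_ [pre ->]] := hnu y yin.
  by rewrite mem_iota add0n ltnS size_cat size_map size_iota leq_addl.
apply: ler_wpM2l; first by rewrite invr_ge0 subr_ge0 ltW // expR_lt1.
rewrite -lee_fin (le_trans _ (hL N)) // finite_source_sum_le ?undup_uniq //.
by move=> a; rewrite mem_undup => /mapP [y yin ->]; case: (hnu y yin).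
Qed.

Lemma orbit_sum_le (L : R) : (forall N, (f N <= L%:E)%E) ->
  (orbit_sum <= ((1 - expR beta)^-1 * L)%:E)%E.
Proof.
move=> hL; apply: ge_ereal_sup => _ [X [finX Xorb] <-].
rewrite fsbig_finite //= sumEFin lee_fin.
apply: orbit_partial_sum_le hL _ _; first exact: finmap.fset_uniq.
by move=> y; rewrite in_fset_set // inE => /Xorb.
Qed.

End SummabilityCriterion.

Unset Implicit Arguments.

Theorem theorem7p6 (R : realType) (V E : countType) (s r : E -> V)
  (xE : nat -> E)
  (hx : inf_path s r xE)
  (h1 : is_source r (s (xE 0%N)))
  (h2 : forall v, Vx s r xE v ->
          finite_set [set e | s e = v /\ edges_in s r (Vx s r xE) e])
  (h3 : no_nontrivial_cycles s r (Vx s r xE))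
  (h4 : finite_set (Vx s r xE `\` Wx s xE))
  (beta : R) (hbeta : beta < 0) :
  beta_summable s r xE beta <-> (limn (source_sum s r xE beta) < +oo)%E.
Proof.
set f := source_sum s r xE beta.
have lim_sup : limn f = ereal_sup (range f).
  apply: cvg_lim; first exact: ereal_hausdorff.
  exact/ereal_nondecreasing_cvgn/source_sum_nondecreasing.
rewrite lim_sup; split.
  case=> _ orbit_fin; apply: le_lt_trans orbit_fin.
  by apply: ge_ereal_sup => _ [n _ <-]; exact: source_sum_le_orbit_sum.
move=> sup_fin; split; first exact: x_not_eventually_periodic hx h3.
have sup_ge0 : (0 <= ereal_sup (range f))%E.
  apply: le_trans (ereal_sup_ubound (ex_intro2 _ _ 0%N I erefl)).
  by apply: esum_ge0 => mu _; exact: expR_ge0.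
have sup_num : ereal_sup (range f) \is a fin_num by rewrite ge0_fin_numE.
apply: le_lt_trans (orbit_sum_le hx h3 h4 hbeta (L := fine (ereal_sup (range f))) _)
  (ltry _).
by move=> N; rewrite fineK //; apply: ereal_sup_ubound; exists N.
Qed.
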